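(* Let $R$ be a commutative ring and let $I, I_1,\ldots,I_n$ be ideals of $R$ with $I\subseteq \bigcup_{k=1}^{n} I_k$. If all but at most two of the ideals $I_1,\ldots,I_n$ are radical ideals, then $I\subseteq I_k$ for some $k$.
   Context: All rings are commutative with $1\neq 0$. An ideal $J$ is radical if $J=\sqrt{J}$. *)

From mathcomp Require Import all_boot all_order all_algebra.
Set Implicit Arguments. Unset Strict Implicit. Unset Printing Implicit Defensive.
Import GRing.Theory.
Local Open Scope ring_scope.

(* An ideal of a commutative ring R, as a subset (predicate) of R.
   The whole ring is allowed (no properness requirement). *)
Definition is_ideal (R : comNzRingType) (J : R -> Prop) : Prop :=
  [/\ J 0,
      (forall x y, J x -> J y -> J (x - y)) &
      (forall r x, J x -> J (r * x))].

Definition radical (R : comNzRingType) (J : R -> Prop) : R -> Prop :=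
  fun x => exists n : nat, J (x ^+ n).

Definition is_radical (R : comNzRingType) (J : R -> Prop) : Prop :=
  forall x, J x <-> radical J x.

(** Replacing each radical ideal I_k by a prime ideal P_k ⊇ I_k that misses a
    chosen element z_k ∈ I \ I_k (a radical ideal is the intersection of the
    primes containing it) reduces the theorem to prime avoidance with at most
    two non-prime ideals.  For prime avoidance, shrink the cover until it is
    irredundant and pick x_k ∈ I lying in I_k only.  If I_k does not contain
    p = ∏_{j ≠ k} x_j, then p + x_k ∈ I lies in no member of the cover; such a
    k exists when the cover has two members (then p = x_l) or at least three
    (take I_k prime). *)
From mathcomp Require Import all_boot all_order all_algebra.
From mathcomp Require Import boolp classical_sets ring.
Set Implicit Arguments. Unset Strict Implicit. Unset Printing Implicit Defensive.
Import GRing.Theory.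
Local Open Scope ring_scope.
Local Open Scope classical_set_scope.

Section Ideals.
Variable R : comNzRingType.
Implicit Types (K : set R) (x y : R).

Definition is_prime K := forall a b, K (a * b) -> K a \/ K b.

Definition avoids_powers (z : R) K := forall m, ~ K (z ^+ m).

Definition ideal_adjoin K a : set R :=
  fun x => exists2 u, K u & exists r, x = u + r * a.

Lemma idealD K x y : is_ideal K -> K x -> K y -> K (x + y).
Proof.
case=> _ KB KM Kx Ky; rewrite -[y]opprK; apply: KB => //.
by rewrite -mulN1r; apply: KM.
Qed.

Lemma idealMr K x y : is_ideal K -> K x -> K (x * y).
Proof. by case=> _ _ KM Kx; rewrite mulrC; apply: KM. Qed.

Lemma idealD_notin K x y : is_ideal K -> K x -> ~ K y -> ~ K (x + y).
Proof.
case=> _ KB _ Kx Ky Kxy; apply: Ky.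
by have := KB _ _ Kxy Kx; rewrite addrAC subrr add0r.
Qed.

Lemma ideal1_notin K x : is_ideal K -> ~ K x -> ~ K 1.
Proof. by move=> hK Kx K1; apply: Kx; rewrite -[x]mul1r; apply: idealMr. Qed.

Lemma ideal_prod_mem (T : finType) K (B : {set T}) (F : T -> R) k :
  is_ideal K -> k \in B -> K (F k) -> K (\prod_(j in B) F j).
Proof. by move=> hK kB Kk; rewrite (bigD1 k) //=; apply: idealMr. Qed.

Lemma prime_prod_notin (T : finType) K (B : {set T}) (F : T -> R) :
  is_prime K -> ~ K 1 -> (forall j, j \in B -> ~ K (F j)) ->
  ~ K (\prod_(j in B) F j).
Proof.
move=> hK K1 KF; apply: (big_ind (fun y => ~ K y)) => // y y' Ky Ky'.
by case/hK.
Qed.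

Lemma radical_avoids_powers K z : is_radical K -> ~ K z -> avoids_powers z K.
Proof. by move=> radK Kz m Kzm; apply/Kz/radK; exists m. Qed.

Lemma ideal_adjoin_ideal K a : is_ideal K -> is_ideal (ideal_adjoin K a).
Proof.
case=> K0 KB KM; split.
- by exists 0 => //; exists 0; rewrite mul0r addr0.
- move=> _ _ [u Ku [r ->]] [v Kv [s ->]].
  by exists (u - v); [apply: KB | exists (r - s); ring].
- move=> t _ [u Ku [r ->]].
  by exists (t * u); [apply: KM | exists (t * r); ring].
Qed.

Lemma ideal_bigcup_chain (F : set (set R)) :
  (exists X, F X) -> (forall X, F X -> is_ideal X) -> total_on F subset ->
  is_ideal (\bigcup_(X in F) X).
Proof.
move=> [X0 FX0] Fideal Ftot; split.
- by exists X0 => //; case: (Fideal _ FX0).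
- move=> x y [X FX Xx] [Y FY Yy].
  have [XY|YX] := Ftot _ _ FX FY.
  + by exists Y => //; case: (Fideal _ FY) => _ YB _; apply: YB => //; apply: XY.
  + by exists X => //; case: (Fideal _ FX) => _ XB _; apply: XB => //; apply: YX.
- by move=> r x [X FX Xx]; exists X => //; case: (Fideal _ FX) => _ _; apply.
Qed.

(* If a, b are not in K then z^m = u + r a and z^l = v + s b with u, v in K,
   and their product z^(m+l) would lie in K as soon as a b does. *)
Lemma maximal_avoiding_prime K z :
  is_ideal K -> avoids_powers z K ->
  (forall a, ~ K a -> exists m, ideal_adjoin K a (z ^+ m)) -> is_prime K.
Proof.
move=> hK Kz Kmax a b Kab; apply: contrapT => /not_orP[Ka Kb].
have [m [u Ku [r zm]]] := Kmax _ Ka.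
have [l [v Kv [s zl]]] := Kmax _ Kb.
apply: (Kz (m + l)%N); rewrite exprD zm zl.
have -> : (u + r * a) * (v + s * b) = u * (v + s * b) + (v * (r * a) + (a * b) * (r * s)).
  by ring.
by apply: idealD => //; [|apply: idealD => //]; apply: idealMr.
Qed.

Lemma exists_prime_avoiding_powers K z :
  is_ideal K -> avoids_powers z K ->
  exists P, [/\ is_ideal P, K `<=` P, is_prime P & ~ P z].
Proof.
move=> hK Kz.
pose admissible A := [/\ is_ideal A, K `<=` A & avoids_powers z A].
have [A [admA maxA]] : exists A, (A = set0 \/ admissible A) /\
    forall B, A `<` B -> ~ (B = set0 \/ admissible B).
  apply: Zorn_bigcup => F Fadm Ftot.
  have memF_adm X x : F X -> X x -> admissible X.
    by move=> FX Xx; case: (Fadm _ FX) => // X0; rewrite X0 in Xx.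
  have [[X0 FX0 [x0 X0x0]]|F0] := pselect (exists2 X, F X & exists x, X x); last first.
    by left; apply/seteqP; split => // x [X FX Xx]; apply: F0; exists X => //; exists x.
  right; have [_ KX0 _] := memF_adm _ _ FX0 X0x0.
  have -> : \bigcup_(X in F) X = \bigcup_(X in F `&` admissible) X.
    apply/seteqP; split => x [X FX Xx]; exists X => //; last by case: FX.
    by split => //; apply: memF_adm Xx.
  split.
  - apply: ideal_bigcup_chain => [|X [_ []]//|X Y [FX _] [FY _]]; last exact: Ftot.
    by exists X0; split => //; apply: memF_adm X0x0.
  - by move=> x Kx; exists X0; [split => //; apply: memF_adm X0x0 | apply: KX0].
  - by move=> m [X [_ [_ _]]]; apply.
have [hA KA Az] : admissible A.
  case: admA => // A0; exfalso; apply: (maxA K); last by right; split.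
  rewrite A0; split; first exact: sub0set.
  by case: hK => K0 _ _ /(_ 0 K0).
exists A; split => //; last by move=> Az1; apply: (Az 1%N); rewrite expr1.
apply: maximal_avoiding_prime => // a Aa; apply: contrapT => Aapow.
apply: (maxA (ideal_adjoin A a)); last first.
  right; split; first exact: ideal_adjoin_ideal.
  - by move=> x Kx; exists x; [apply: KA | exists 0; rewrite mul0r addr0].
  - by move=> m Am; apply: Aapow; exists m.
split; first by move=> x Ax; exists x => //; exists 0; rewrite mul0r addr0.
by move=> AaA; apply/Aa/AaA; exists 0; [case: hA | exists 1; rewrite add0r mul1r].
Qed.

End Ideals.

Section PrimeAvoidance.
Variables (R : comNzRingType) (T : finType) (I : set R) (J : T -> set R) (S : {set T}).
Hypotheses (hI : is_ideal I) (hJ : forall k, is_ideal (J k)) (S_le2 : (#|S| <= 2)%N).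
Hypothesis J_prime : forall k, k \notin S -> is_prime (J k).

Lemma irredundant_cover_card_le1 (A : {set T}) (x : T -> R) :
  (forall y, I y -> exists2 k, k \in A & J k y) ->
  (forall k, k \in A ->
     [/\ I (x k), J k (x k) & forall j, j \in A -> j != k -> ~ J j (x k)]) ->
  (#|A| <= 1)%N.
Proof.
move=> cover hx; rewrite leqNgt; apply/negP => A_gt1.
have other k : k \in A -> exists l, l \in A :\ k.
  move=> kA; apply/set0Pn; rewrite -card_gt0.
  by move: A_gt1; rewrite (cardsD1 k) kA.
pose p k := \prod_(j in A :\ k) x j.
have [k kA Jkp] : exists2 k, k \in A & ~ J k (p k).
  have [A_gt2|A_le2] := ltnP 2 #|A|.
    have /subsetPn[k kA kS] : ~~ (A \subset S).
      by apply: contraTN A_gt2 => /subset_leq_card AS; rewrite -leqNgt (leq_trans AS).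
    have [l /setD1P[lk lA]] := other k kA.
    exists k => //; apply: prime_prod_notin => [||j /setD1P[jk jA]].
    - exact: J_prime.
    - apply: (ideal1_notin (hJ k) (x := x l)).
      by have [_ _] := hx l lA; apply; rewrite // eq_sym.
    - by have [_ _] := hx j jA; apply; rewrite // eq_sym.
  have [k kA] : exists k, k \in A by apply/set0Pn; rewrite -card_gt0 ltnW.
  have /cards1P[l Akl] : #|A :\ k| == 1%N.
    by move: (cardsD1 k A) A_gt1 A_le2; rewrite kA => ->; case: #|A :\ k| => [|[|]].
  have /setD1P[lk lA] : l \in A :\ k by rewrite Akl set11.
  exists k => //; rewrite /p Akl big_set1.
  by have [_ _] := hx l lA; apply; rewrite // eq_sym.
have [l lAk] := other k kA.
have [Ixk Jkxk Jxk] := hx k kA.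
have Ip : I (p k).
  have /setD1P[_ lA] := lAk; have [Ixl _ _] := hx l lA.
  exact: ideal_prod_mem lAk Ixl.
have [m mA Jm] := cover _ (idealD hI Ip Ixk).
have [mk|mk] := eqVneq m k.
- by rewrite mk addrC in Jm; apply: (idealD_notin (hJ k) Jkxk Jkp).
- have mAk : m \in A :\ k by rewrite !inE mk.
  have [_ Jmxm _] := hx m mA.
  exact: idealD_notin (hJ m) (ideal_prod_mem (hJ m) mAk Jmxm) (Jxk m mA mk) Jm.
Qed.

Lemma prime_avoidance (A : {set T}) :
  (forall y, I y -> exists2 k, k \in A & J k y) -> exists2 k, k \in A & I `<=` J k.
Proof.
elim: {A}_.+1 {-2}A (ltnSn #|A|) => // N IH A A_le cover.
have [[k kA redundant]|irredundant] := pselect (exists2 k, k \in A &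
    forall y, I y -> exists2 j, j \in A :\ k & J j y).
  have [|j /setD1P[_ jA] IJ] := IH (A :\ k) _ redundant; last by exists j.
  by move: A_le; rewrite (cardsD1 k) kA.
have witness k : exists y, k \in A ->
    [/\ I y, J k y & forall j, j \in A -> j != k -> ~ J j y].
  have [kA|kA] := boolP (k \in A); last by exists 0.
  have /existsNP[y /not_implyP[Iy notcov]] :
      ~ forall y, I y -> exists2 j, j \in A :\ k & J j y.
    by move=> cov; apply: irredundant; exists k.
  exists y => _; have [j jA Jjy] := cover y Iy.
  have [jk|jk] := eqVneq j k; last by exfalso; apply: notcov; exists j; rewrite ?inE ?jk.
  subst j; split => // i iA ik Jiy; apply: notcov; exists i => //.
  by rewrite !inE ik.
have [x hx] := choice witness.
have A_le1 := irredundant_cover_card_le1 cover hx.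
have [I0 _ _] := hI; have [k kA _] := cover 0 I0.
exists k => // y Iy; have [j jA Jjy] := cover y Iy.
by rewrite (card_le1_eqP A_le1 j k jA kA).
Qed.

End PrimeAvoidance.

Theorem theorem2p1 (R : comNzRingType) (n : nat) (I : R -> Prop)
    (Is : 'I_n -> R -> Prop)
    (hI : is_ideal I) (hIs : forall k, is_ideal (Is k))
    (hcover : forall x, I x -> exists k, Is k x)
    (hrad : exists S : {set 'I_n},
        (#|S| <= 2)%N /\ forall k, k \notin S -> is_radical (Is k)) :
  exists k, forall x, I x -> Is k x.
Proof.
have [S [S_le2 S_rad]] := hrad.
apply: contrapT => /forallNP notcontained.
have [z hz] := choice (fun k => (existsNP _).2 (notcontained k)).
have hP k : exists P : set R,
    [/\ is_ideal P, Is k `<=` P, ~ P (z k) & k \notin S -> is_prime P].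
  have /not_implyP[_ Iszk] := hz k.
  have [kS|kS] := boolP (k \in S); first by exists (Is k); split => //; rewrite kS.
  have [P [? ? ? ?]] := exists_prime_avoiding_powers (hIs k)
    (radical_avoids_powers (S_rad k kS) Iszk).
  by exists P.
have [P {}hP] := choice hP.
have [|||k _ IPk] := @prime_avoidance R _ I P S hI _ S_le2 _ [set: 'I_n]%SET.
- by move=> k; case: (hP k).
- by move=> k; case: (hP k) => _ _ _; apply.
- by move=> y /hcover[k Isy]; exists k => //; case: (hP k) => _ + _ _; apply.
- by case: (hP k) => _ _ + _; apply; apply: IPk; have /not_implyP[] := hz k.
Qed.
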